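(* Let $p=p(n)\in[0,1]$, let $\omega=\omega(n)\to\infty$ as $n\to\infty$, and set $z=z(n,\omega):=\omega\sqrt{n}$. Suppose there is a function $\Gamma=\Gamma(z,n,p)$ such that, with high probability, $$\max_{Z\subseteq[n]:\,|Z|\le z}\chi\big(G_{n,p}[Z]\big)\le\Gamma.$$ Then with high probability $|\chi(G_{n,p})-\Lambda|\le\Gamma$, where $\Lambda=\Lambda(n,p)$ is the smallest integer with $\Pr(\chi(G_{n,p})\le\Lambda)\ge1/2$.
   Context: $G_{n,p}$ denotes the binomial random graph on vertex set $[n]$ in which each pair of vertices is an edge independently with probability $p$; $G[Z]$ is the subgraph induced by the vertex set $Z$; $\chi$ denotes the chromatic number. ''With high probability'' means with probability tending to $1$ as $n\to\infty$. *)

From HB Require Import structures.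
From mathcomp Require Import all_boot all_order all_algebra.
From mathcomp Require Import all_classical all_reals all_analysis.
Set Implicit Arguments. Unset Strict Implicit. Unset Printing Implicit Defensive.
Import Order.TTheory GRing.Theory Num.Theory.
Import numFieldNormedType.Exports.
Local Open Scope ring_scope.

(* A simple graph on vertex set 'I_n ([n]) is a set E of 2-element subsets. *)
Definition pairs (n : nat) : {set {set 'I_n}} := [set e : {set 'I_n} | #|e| == 2%N].

Definition proper_on n k (E : {set {set 'I_n}}) (Z : {set 'I_n}) (f : {ffun 'I_n -> 'I_k}) : bool :=
  [forall u, forall v, [&& u \in Z, v \in Z & [set u; v] \in E] ==> (f u != f v)].

Definition colorable n (E : {set {set 'I_n}}) (Z : {set 'I_n}) (k : nat) : bool :=
  [exists f : {ffun 'I_n -> 'I_k}, proper_on E Z f].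

(* chromatic number of G[Z]: least k colourable (always <= n, witnessed by the identity) *)
Definition chi n (E : {set {set 'I_n}}) (Z : {set 'I_n}) : nat :=
  \big[minn/n]_(k < n.+1 | colorable E Z k) k.

(* Probability of an event A under G_{n,p}: each pair is an edge independently w.p. p *)
Definition Pr (R : realType) (n : nat) (p : R) (A : pred {set {set 'I_n}}) : R :=
  \sum_(E in powerset (pairs n))
     (p ^+ #|E| * (1 - p) ^+ (#|pairs n| - #|E|)) * (A E)%:R.

Local Open Scope classical_set_scope.
Definition whp (R : realType) (p : nat -> R) (A : forall n, pred {set {set 'I_n}}) : Prop :=
  (fun n => Pr (p n) (A n)) @ \oo --> (1 : R).

From HB Require Import structures.
From mathcomp Require Import all_boot all_order all_algebra.
From mathcomp Require Import all_classical all_reals all_analysis.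
From mathcomp Require Import ring lra zify.
(* Re-import so that finset's [set0], [setUC], ... shadow their classical_sets
   namesakes. *)
From mathcomp Require Import fintype finset.
Set Implicit Arguments. Unset Strict Implicit. Unset Printing Implicit Defensive.
Import Order.TTheory GRing.Theory Num.Theory.
Import numFieldNormedType.Exports.
Local Open Scope ring_scope.

(* Let Y_k(G) ([deficiency k]) be the least number of vertices whose deletion
   leaves a k-colourable graph.  Exposing G_{n,p} vertex by vertex, Y_k moves
   by at most 1 per step, so the squared martingale increments sum to at most n:
   Var Y_k <= n, and Y_k lies within O(sqrt n) of its mean with probability
   close to 1.  If P(chi <= k) >= eps then Y_k = 0 with probability >= eps,
   which Chebyshev only allows when E Y_k < (1/eps + 1) sqrt n; hence
   Y_k <= omega sqrt n whp, and colouring the deleted vertices with Gamma fresh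
   colours gives chi <= k + Gamma whp.  Taking k = Lambda gives the upper bound.
   Taking k the largest integer below Lambda - Gamma, a non-negligible
   probability of chi < Lambda - Gamma would give chi <= Lambda - 1 with
   probability above 1/2, contradicting the minimality of Lambda. *)

Section Averaging.
Variables (R : realFieldType) (T : finType) (p : R).
Implicit Types (x y : T) (s t : seq T) (E F A B S U : {set T}) (a b c : R).
Implicit Types (f phi psi chi : {set T} -> R).

Hypothesis p01 : 0 <= p <= 1.

(* [avg S phi] integrates out the (independent, probability [p]) membership of
   each element of [S]: it is the conditional expectation of [phi] given the
   coordinates outside [S]. *)
Definition avg1 x phi E := p * phi (x |: E) + (1 - p) * phi (E :\ x).
Definition avgs s phi := foldr avg1 phi s.
Definition avg S phi := avgs (enum S) phi.
Definition indep_of x phi := forall E, phi (x |: E) = phi (E :\ x).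

Lemma setD1_id x E : x \notin E -> E :\ x = E.
Proof.
by move=> xNE; apply/setP=> y; rewrite !inE; case: eqP => // ->; rewrite (negbTE xNE).
Qed.

Lemma indep_ofE x chi E : indep_of x chi -> chi (x |: E) = chi E /\ chi (E :\ x) = chi E.
Proof.
move=> chi_x; have [xE | xNE] := boolP (x \in E).
  have xUE : x |: E = E by apply/setUidPr; rewrite sub1set.
  by rewrite -chi_x xUE.
by rewrite chi_x setD1_id.
Qed.

Lemma avg1_indep x phi : indep_of x (avg1 x phi).
Proof.
by move=> E; rewrite /avg1; congr (_ * phi _ + _ * phi _);
  apply/setP=> y; rewrite !inE; case: eqP.
Qed.

Lemma avg1_id x chi : indep_of x chi -> avg1 x chi = chi.
Proof.
by move=> chi_x; apply/funext=> E; rewrite /avg1; case: (indep_ofE E chi_x) => -> ->; ring.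
Qed.

Lemma setU1D1C x y E : x != y -> x |: (E :\ y) = (x |: E) :\ y.
Proof. by move=> xy; apply/setP=> z; rewrite !inE; case: (eqVneq z x) => // ->; rewrite xy. Qed.

Lemma setD1C E x y : E :\ x :\ y = E :\ y :\ x.
Proof. by rewrite !setDDl setUC. Qed.

Lemma indep_avg1 x y phi : indep_of y phi -> indep_of y (avg1 x phi).
Proof.
have [<- _ | xy phi_y E] := eqVneq x y; first exact: avg1_indep.
have yx : y != x by rewrite eq_sym.
rewrite /avg1 setUCA -(setU1D1C E yx) !phi_y.
by rewrite (setU1D1C E xy) (setD1C E y x).
Qed.

Lemma avg1C x y phi : avg1 x (avg1 y phi) = avg1 y (avg1 x phi).
Proof.
apply/funext=> E; have [-> // | xy] := eqVneq x y; rewrite /avg1.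
have yx : y != x by rewrite eq_sym.
rewrite (setUCA [set y] [set x] E) -(setU1D1C E xy) (setU1D1C E yx) (setD1C E x y).
ring.
Qed.

Lemma avgs_avg1 x s phi : avgs s (avg1 x phi) = avg1 x (avgs s phi).
Proof. by elim: s => //= y s IHs; rewrite IHs avg1C. Qed.

Lemma avgsC s t phi : avgs s (avgs t phi) = avgs t (avgs s phi).
Proof. by elim: t => //= x t IHt; rewrite avgs_avg1 IHt. Qed.

Lemma avgs_indep x s phi : x \in s -> indep_of x (avgs s phi).
Proof.
elim: s => // y s IHs; rewrite inE => /predU1P[-> | xs] /=; first exact: avg1_indep.
exact/indep_avg1/IHs.
Qed.

Lemma avgs_sub s t phi : {subset t <= s} -> avgs s (avgs t phi) = avgs s phi.
Proof.
elim: t => //= x t IHt /allP /= /andP[xs /allP ts].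
by rewrite avgs_avg1 IHt // avg1_id //; apply: avgs_indep.
Qed.

Lemma avgs_eq s t phi : s =i t -> avgs s phi = avgs t phi.
Proof.
move=> st; rewrite -[LHS](@avgs_sub s t) => [|x]; last by rewrite st.
by rewrite avgsC avgs_sub // => x; rewrite st.
Qed.

Lemma avg0 phi : avg set0 phi = phi.
Proof. by rewrite /avg enum_set0. Qed.

Lemma avgU A B phi : avg (A :|: B) phi = avg A (avg B phi).
Proof.
by rewrite /avg /avgs -foldr_cat; apply: avgs_eq => x; rewrite mem_cat !mem_enum inE.
Qed.

Lemma avgC A B phi : avg A (avg B phi) = avg B (avg A phi).
Proof. by rewrite -!avgU setUC. Qed.

Lemma avg_indep x S phi : x \in S -> indep_of x (avg S phi).
Proof. by rewrite -mem_enum; apply: avgs_indep. Qed.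

Lemma avg_lin S a b phi psi :
  avg S (fun E => a * phi E + b * psi E) = (fun E => a * avg S phi E + b * avg S psi E).
Proof.
rewrite /avg; elim: (enum S) => //= x s ->.
by apply/funext=> E; rewrite /avg1; ring.
Qed.

Lemma avg_cst S c : avg S (fun _ => c) = (fun _ => c).
Proof. by rewrite /avg; elim: (enum S) => //= x s ->; apply/funext=> E; rewrite /avg1; ring. Qed.

Lemma avg_mulr S phi chi : {in S, forall x, indep_of x chi} ->
  avg S (fun E => phi E * chi E) = (fun E => avg S phi E * chi E).
Proof.
rewrite /avg => chiS; have : {subset enum S <= S} by move=> x; rewrite mem_enum.
elim: (enum S) => //= x s IHs /allP /= /andP[/chiS chi_x /allP sS].
by rewrite IHs //; apply/funext=> E; rewrite /avg1; case: (indep_ofE E chi_x) => -> ->; ring.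
Qed.

Lemma avgs_bound lo hi s f E :
    (forall E', (forall y, y \notin s -> (y \in E') = (y \in E)) -> lo <= f E' <= hi) ->
  lo <= avgs s f E <= hi.
Proof.
elim: s E => [|x s IHs] E fE /=; first by apply: fE.
have conv a b : lo <= a <= hi -> lo <= b <= hi -> lo <= p * a + (1 - p) * b <= hi.
  move=> /andP[? ?] /andP[? ?]; case/andP: p01 => ? ?; apply/andP; split; nra.
apply: conv; apply: IHs => E' E'E; apply: fE => y; rewrite inE negb_or => /andP[yx ys];
  by rewrite E'E // !inE (negbTE yx).
Qed.

Lemma avg_bound lo hi S f E :
  (forall E', E' :\: S = E :\: S -> lo <= f E' <= hi) -> lo <= avg S f E <= hi.
Proof.
move=> fE; apply: avgs_bound => E' E'E; apply: fE; apply/setP=> y; rewrite !inE.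
by case: (boolP (y \in S)) => //= yNS; rewrite E'E // mem_enum.
Qed.

Lemma sum_powersetU1 x S (g : {set T} -> R) : x \notin S ->
  \sum_(F in powerset (x |: S)) g F =
    \sum_(F in powerset S) g F + \sum_(F in powerset S) g (x |: F).
Proof.
move=> xNS; rewrite (bigID (fun F => x \in F)) /= addrC; congr (_ + _).
  by apply: eq_bigl => F; rewrite !inE -subsetD1 setU1K.
rewrite (reindex_onto (fun F => x |: F) (fun F => F :\ x)) /=; last first.
  by move=> F /andP[_ xF]; rewrite setD1K.
apply: eq_bigl => F; rewrite !inE eqxx andbT /=; apply/idP/idP.
  by case/andP=> sFxS /eqP <-; rewrite -(setU1K xNS); apply: setSD.
move=> sFS; have xNF : x \notin F by apply: contra xNS; apply: (subsetP sFS).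
by rewrite setU1K // eqxx setUS.
Qed.

Lemma avgs_sum s phi E : uniq s ->
  avgs s phi E = \sum_(F in powerset [set x in s])
    p ^+ #|F| * (1 - p) ^+ (size s - #|F|) * phi (E :\: [set x in s] :|: F).
Proof.
elim: s E => [|x s IHs] E /=.
  by rewrite set_nil powerset0 big_set1 cards0 setD0 setU0 !expr0 !mul1r.
case/andP=> xNs us; have xNS : x \notin [set y in s] by rewrite inE.
rewrite set_cons sum_powersetU1 // /avg1 !IHs // addrC !mulr_sumr.
congr (_ + _); apply: eq_bigr => F; rewrite inE => sFS.
  have cF : (#|F| <= size s)%N.
    by have := subset_leq_card sFS; rewrite cardsE (card_uniqP us).
  have -> : E :\: (x |: [set y in s]) :|: F = E :\ x :\: [set y in s] :|: F.
    by apply/setP=> y; rewrite !inE; case: eqP => //= _; rewrite andbF.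
  by rewrite subSn // exprS; ring.
have xNF : x \notin F by apply: contra xNS; apply: (subsetP sFS).
have -> : E :\: (x |: [set y in s]) :|: (x |: F) = (x |: E) :\: [set y in s] :|: F.
  by apply/setP=> y; rewrite !inE; case: eqP => //= ->; rewrite xNs.
by rewrite cardsU1 xNF add1n subSS exprS; ring.
Qed.

Definition mean U phi :=
  \sum_(F in powerset U) p ^+ #|F| * (1 - p) ^+ (#|U| - #|F|) * phi F.

Lemma mean_avg U phi : mean U phi = avg U phi set0.
Proof.
rewrite /avg avgs_sum ?enum_uniq // set_enum -cardE.
by apply: eq_bigr => F _; rewrite set0D set0U.
Qed.

Lemma avg_setD S phi E : avg S phi E = avg S phi (E :\: S).
Proof.
rewrite /avg !avgs_sum ?enum_uniq // set_enum; apply: eq_bigr => F _.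
by rewrite setDDl setUid.
Qed.

Lemma avg_mean U phi E : E \subset U -> avg U phi E = mean U phi.
Proof.
by move=> sEU; rewrite mean_avg avg_setD (eqP (_ : E :\: U == set0)) ?setD_eq0.
Qed.

Lemma eq_mean U phi psi : {in powerset U, phi =1 psi} -> mean U phi = mean U psi.
Proof. by move=> eq_phi; apply: eq_bigr => F /eq_phi ->. Qed.

Lemma meanD U phi psi : mean U (fun E => phi E + psi E) = mean U phi + mean U psi.
Proof. by rewrite /mean -big_split; apply: eq_bigr => F _; rewrite mulrDr. Qed.

Lemma meanZ U a phi : mean U (fun E => a * phi E) = a * mean U phi.
Proof. by rewrite /mean mulr_sumr; apply: eq_bigr => F _; rewrite mulrCA. Qed.

Lemma mean_cst U c : mean U (fun _ => c) = c.
Proof. by rewrite mean_avg avg_cst. Qed.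

Lemma ler_mean U phi psi :
  {in powerset U, forall E, phi E <= psi E} -> mean U phi <= mean U psi.
Proof.
case/andP: p01 => p0 p1 le_phi; apply: ler_sum => F FU; apply: ler_wpM2l (le_phi F FU).
by rewrite mulr_ge0 // exprn_ge0 // subr_ge0.
Qed.

Lemma mean_avgS U S phi : S \subset U -> mean U (avg S phi) = mean U phi.
Proof. by move=> sSU; rewrite !mean_avg -avgU (setUidPl sSU). Qed.

Definition lipschitz_on S f := forall E E', E :\: S = E' :\: S -> f E' <= f E + 1.

Lemma lipschitz_avg_dist S f E : lipschitz_on S f -> `|f E - avg S f E| <= 1.
Proof.
move=> f_lip; rewrite ler_norml.
have /andP[] : f E - 1 <= avg S f E <= f E + 1.
  by apply: avg_bound => E' E'E; rewrite lerBlDr !f_lip // E'E.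
by move=> *; apply/andP; split; lra.
Qed.

Lemma mean_sqr_avg U S phi : S \subset U ->
  mean U (fun E => (phi E - avg S phi E) ^+ 2) =
    mean U (fun E => phi E ^+ 2) - mean U (fun E => avg S phi E ^+ 2).
Proof.
move=> sSU; have cross : mean U (fun E => phi E * avg S phi E) =
    mean U (fun E => avg S phi E ^+ 2).
  rewrite -(mean_avgS _ sSU) avg_mulr; last by move=> x xS; apply: avg_indep.
  by apply: eq_mean => E _; rewrite expr2.
rewrite (_ : (fun E => _) = fun E => phi E ^+ 2 +
    (-2 * (phi E * avg S phi E) + avg S phi E ^+ 2)); last by apply/funext=> E; ring.
by rewrite !meanD meanZ cross; ring.
Qed.

Lemma mean_sqr_dev U f :
  mean U (fun E => (f E - mean U f) ^+ 2) = mean U (fun E => f E ^+ 2) - mean U f ^+ 2.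
Proof.
rewrite (_ : (fun E => _) =
  fun E => f E ^+ 2 + (-2 * mean U f * f E + mean U f ^+ 2)); last first.
  by apply/funext=> E; ring.
by rewrite !meanD meanZ mean_cst; ring.
Qed.

Lemma mean_sqr_avg_lipschitz U S W f : S \subset U -> lipschitz_on S f ->
  mean U (fun E => avg W f E ^+ 2) - mean U (fun E => avg S (avg W f) E ^+ 2) <= 1.
Proof.
move=> sSU f_lip; rewrite -mean_sqr_avg // -[X in _ <= X](mean_cst U).
apply: ler_mean => E _.
have -> : avg W f E - avg S (avg W f) E = avg W (fun E => 1 * f E + -1 * avg S f E) E.
  by rewrite avg_lin avgC; ring.
have /andP[lo hi] : -1 <= avg W (fun E => 1 * f E + -1 * avg S f E) E <= 1.
  apply: avg_bound => E' _; rewrite -ler_norml mul1r mulN1r.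
  exact: lipschitz_avg_dist.
nra.
Qed.

Lemma variance_chain_le U (V : nat -> {set T}) m f :
    V 0 = set0 -> V m = U -> (forall i, V i \subset V i.+1) ->
    (forall i, (i < m)%N -> lipschitz_on (V i.+1 :\: V i) f) ->
  mean U (fun E => (f E - mean U f) ^+ 2) <= m%:R.
Proof.
move=> V0 Vm VS f_lip; pose g i := avg (V i) f.
have VU i : (i <= m)%N -> V i \subset U.
  rewrite -Vm => /subnK <-; elim: (m - i)%N => // k IHk.
  by rewrite addSn (subset_trans IHk).
have gS i : g i.+1 = avg (V i.+1 :\: V i) (g i).
  rewrite /g -avgU; congr avg; apply/setP=> e; rewrite !inE orb_andl orNb /=.
  by apply/esym/orb_idr/(subsetP (VS i)).
have telescope j : (j <= m)%N ->
    mean U (fun E => f E ^+ 2) - mean U (fun E => g j E ^+ 2) <= j%:R.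
  elim: j => [_ | j IHj jm]; first by rewrite /g V0 avg0 subrr.
  have sDU : V j.+1 :\: V j \subset U by rewrite (subset_trans (subsetDl _ _)) ?VU.
  have := mean_sqr_avg_lipschitz (V j) sDU (f_lip j jm); rewrite -gS.
  by have := IHj (ltnW jm); rewrite -natr1; lra.
rewrite mean_sqr_dev; have -> : mean U f ^+ 2 = mean U (fun E => g m E ^+ 2).
  rewrite -[LHS](mean_cst U); apply: eq_mean => E.
  by rewrite inE /g Vm => /avg_mean ->.
exact: telescope.
Qed.

Lemma mean_dev_ge U f (s : R) : 0 < s ->
  mean U (fun E => (s <= `|f E - mean U f|)%R%:R) <=
    mean U (fun E => (f E - mean U f) ^+ 2) / s ^+ 2.
Proof.
move=> s0; rewrite mulrC -meanZ; apply: ler_mean => E _.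
have s2 : 0 < s ^+ 2 by rewrite exprn_gt0.
have [le_s | _] := boolP (s <= _); last by rewrite mulr_ge0 ?sqr_ge0 ?invr_ge0 ?ltW.
rewrite mulrC ler_pdivlMr // mul1r.
by move: le_s; rewrite ler_normr => /orP[] ?; nra.
Qed.
End Averaging.

Lemma geq_bigminn_cond (I : finType) (P : pred I) (F : I -> nat) m j :
  P j -> (\big[minn/m]_(i | P i) F i <= F j)%N.
Proof.
move=> Pj; have : j \in index_enum I by rewrite mem_index_enum.
elim: (index_enum I) => // i r IHr; rewrite inE big_cons => /predU1P[<- | jr].
  by rewrite Pj geq_minl.
by case: ifP => _; rewrite ?geq_min IHr ?orbT.
Qed.

Section Colouring.
Variable n : nat.
Implicit Types (k : nat) (E : {set {set 'I_n}}) (Z A B : {set 'I_n}).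

Lemma properP k E Z (f : {ffun 'I_n -> 'I_k}) :
  reflect (forall u v, u \in Z -> v \in Z -> [set u; v] \in E -> f u != f v)
          (proper_on E Z f).
Proof.
apply: (iffP forallP) => [f_ok u v uZ vZ uvE | f_ok u].
  by move: (f_ok u) => /forallP/(_ v)/implyP; apply; apply/and3P.
by apply/forallP=> v; apply/implyP=> /and3P[uZ vZ uvE]; apply: f_ok.
Qed.

Lemma colorable_gt0 k E Z : (0 < n)%N -> colorable E Z k -> (0 < k)%N.
Proof. by move=> n0 /existsP[f _]; case: k f => // f; case: (f (Ordinal n0)). Qed.

Lemma colorable_widen k k' E Z : (k <= k')%N -> colorable E Z k -> colorable E Z k'.
Proof.
move=> kk' /existsP[f /properP f_ok]; apply/existsP.
exists [ffun u => widen_ord kk' (f u)]; apply/properP=> u v uZ vZ uvE.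
by rewrite !ffunE -(inj_eq val_inj) /= (inj_eq val_inj) f_ok.
Qed.

Lemma colorableU a b E A B :
  colorable E A a -> colorable E B b -> colorable E (A :|: B) (a + b).
Proof.
move=> /existsP[f /properP f_ok] /existsP[g /properP g_ok]; apply/existsP.
exists [ffun u => if u \in A then lshift b (f u) else rshift a (g u)].
apply/properP=> u v; rewrite !inE !ffunE -(inj_eq val_inj) => uAB vAB uvE.
case: (boolP (u \in A)) => uA; case: (boolP (v \in A)) => vA /=.
- by rewrite (inj_eq val_inj) f_ok.
- by rewrite neq_ltn ltn_addr.
- by rewrite neq_ltn ltn_addr ?orbT.
- move: uAB vAB; rewrite (negbTE uA) (negbTE vA) => uB vB.
  by rewrite eqn_add2l (inj_eq val_inj) g_ok.
Qed.

Lemma colorable_n E Z : E \subset pairs n -> colorable E Z n.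
Proof.
move=> EP; apply/existsP; exists [ffun u => u]; apply/properP=> u v _ _ uvE.
by rewrite !ffunE; apply: contraTneq (subsetP EP _ uvE) => ->; rewrite inE setUid cards1.
Qed.

Lemma chi_colorable E Z : E \subset pairs n -> colorable E Z (chi E Z).
Proof.
move=> EP; apply: (big_ind (colorable E Z)) => //; first exact: colorable_n.
by move=> a b; rewrite /minn; case: ifP.
Qed.

Lemma chi_min k E Z : colorable E Z k -> (chi E Z <= k)%N.
Proof.
move=> colk; have [kn | nk] := leqP k n.
  by rewrite -ltnS in kn; apply: (geq_bigminn_cond _ _ (j := Ordinal kn)).
apply: leq_trans (ltnW nk); apply: (big_ind (fun a => a <= n)%N) => // [a b|i _].
  by rewrite geq_min => ->.
by rewrite -ltnS.
Qed.

Lemma chi_gt0 E Z : (0 < n)%N -> (0 < chi E Z)%N.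
Proof.
move=> n0; apply: (big_ind (fun a => 0 < a)%N) => // [a b|i]; first by rewrite leq_min => ->.
exact: colorable_gt0.
Qed.

(* For [k = 0] no [Z] qualifies when [n > 0], and [n] is a junk value. *)
Definition deficiency k E := \big[minn/n]_(Z | colorable E (~: Z) k) #|Z|.

Lemma deficiency_le k E Z : colorable E (~: Z) k -> (deficiency k E <= #|Z|)%N.
Proof. exact: (geq_bigminn_cond (fun Z : {set 'I_n} => #|Z|)). Qed.

Lemma deficiency_witness k E : (0 < k)%N ->
  exists2 Z, colorable E (~: Z) k & #|Z| = deficiency k E.
Proof.
move=> k0; apply: (big_ind (fun a => exists2 Z, colorable E (~: Z) k & #|Z| = a)).
- exists [set: 'I_n]; last by rewrite cardsT card_ord.
  by apply/existsP; exists [ffun=> Ordinal k0]; apply/properP=> u v; rewrite !inE.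
- by move=> a b; rewrite /minn; case: ifP.
- by move=> Z colZ; exists Z.
Qed.

Lemma deficiency_lipschitz k (v : 'I_n) E E' : (0 < k)%N ->
    (forall e, (e \in E) != (e \in E') -> v \in e) ->
  (deficiency k E' <= (deficiency k E).+1)%N.
Proof.
move=> k0 EE'v; have [Z /existsP[f /properP f_ok] <-] := deficiency_witness E k0.
apply: leq_trans (deficiency_le (Z := v |: Z) _) _; last first.
  by rewrite cardsU1; case: (v \in Z).
apply/existsP; exists f; apply/properP=> u w.
rewrite !inE !negb_or => /andP[uv uZ] /andP[wv wZ] uwE'.
apply: f_ok; rewrite ?inE //; apply: contraNT uv => uwNE.
have /EE'v : ([set u; w] \in E) != ([set u; w] \in E') by rewrite uwE' (negbTE uwNE).
by rewrite !inE => /orP[/eqP-> // | /eqP vw]; rewrite vw eqxx in wv.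
Qed.

Lemma chi_le_deficiency_add (R : realDomainType) (z : R) k E :
    E \subset pairs n -> (0 < k)%N -> (deficiency k E)%:R <= z ->
  (chi E [set: 'I_n]%SET <= k + \max_(Z : {set 'I_n} | ((#|Z|%:R : R) <= z)%R) chi E Z)%N.
Proof.
move=> EP k0 def_z; have [Z colZ eZ] := deficiency_witness E k0.
have := colorableU colZ (chi_colorable Z EP); rewrite setUC setUCr => /chi_min.
move/leq_trans; apply; rewrite leq_add2l.
by apply: (leq_bigmax_cond (P := fun Z : {set 'I_n} => (#|Z|%:R <= z)%R)); rewrite eZ.
Qed.
End Colouring.

Section VertexExposure.
Variable n : nat.

Definition pairs_below i : {set {set 'I_n}} :=
  [set e in pairs n | [forall j in e, (j < i)%N]].

Lemma pairs_below0 : pairs_below 0 = set0.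
Proof.
apply/setP=> e; rewrite !inE; apply/negbTE/andP=> -[e2 /forall_inP e_lt0].
have /set0Pn[j je] : e != set0 by rewrite -card_gt0 (eqP e2).
by have := e_lt0 j je.
Qed.

Lemma pairs_below_n : pairs_below n = pairs n.
Proof. by apply/setP=> e; rewrite inE andb_idr // => _; apply/forall_inP=> j _. Qed.

Lemma pairs_belowS i : pairs_below i \subset pairs_below i.+1.
Proof.
apply/subsetP=> e; rewrite !inE => /andP[-> /forall_inP e_lt].
by apply/forall_inP=> j /e_lt /ltnW.
Qed.

Lemma mem_pairs_belowSD i e : e \in pairs_below i.+1 :\: pairs_below i ->
  exists2 j : 'I_n, j \in e & val j = i.
Proof.
rewrite !inE => /andP[e_ge /andP[eP /forall_inP e_le]].
rewrite eP /= in e_ge; case/forall_inPn: e_ge => j je; rewrite -leqNgt => ij.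
by exists j => //; apply/eqP; rewrite eqn_leq ij -ltnS e_le.
Qed.

Lemma deficiency_lipschitz_on (R : realFieldType) k i : (0 < k)%N ->
  lipschitz_on (pairs_below i.+1 :\: pairs_below i) (fun E => (deficiency k E)%:R : R).
Proof.
move=> k0 E E'; set D := pairs_below i.+1 :\: pairs_below i => EE'.
rewrite natr1 ler_nat.
have diffD e : (e \in E) != (e \in E') -> e \in D.
  apply: contraLR => eND; rewrite negbK; move/setP/(_ e): EE'.
  by rewrite [e \in E :\: D]in_setD [e \in E' :\: D]in_setD (negbTE eND) /= => ->.
have [e /[dup] /diffD /mem_pairs_belowSD[j je ji] _ | E_E'] :=
  pickP (fun e => (e \in E) != (e \in E')).
  apply: (deficiency_lipschitz (v := j)) => // e' /diffD /mem_pairs_belowSD[j' j'e' j'i].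
  by rewrite (_ : j = j') //; apply: val_inj; rewrite ji j'i.
have -> : E' = E by apply/setP=> e; apply/esym/eqP/negbFE/E_E'.
exact: leqnSn.
Qed.
End VertexExposure.

Section GnpProbability.
Variables (R : realType) (n : nat) (p : R).
Hypothesis p01 : 0 <= p <= 1.
Local Notation graph := {set {set 'I_n}}.
Implicit Types (A B C : pred graph) (k : nat).

Lemma PrE A : Pr p A = mean p (pairs n) (fun E => (A E)%:R).
Proof. by []. Qed.

Lemma ler_Pr A B : {in powerset (pairs n), forall E, A E -> B E} -> Pr p A <= Pr p B.
Proof.
move=> AB; rewrite !PrE; apply: ler_mean => // E /AB.
by case: (A E) => [-> // | _]; rewrite ler0n.
Qed.

Lemma Pr_le1 A : Pr p A <= 1.
Proof.
rewrite PrE -[X in _ <= X](mean_cst p (pairs n)); apply: ler_mean => // E _.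
by rewrite lern1 leq_b1.
Qed.

Lemma Pr_pred0 A : {in powerset (pairs n), forall E, ~~ A E} -> Pr p A = 0.
Proof.
move=> A0; rewrite PrE -[RHS](mean_cst p (pairs n)); apply: eq_mean => E /A0.
by move/negbTE ->.
Qed.

Lemma Pr_subU A B C :
  {in powerset (pairs n), forall E, A E -> B E || C E} -> Pr p A <= Pr p B + Pr p C.
Proof.
move=> ABC; rewrite !PrE -meanD; apply: ler_mean => // E /ABC.
by rewrite -natrD ler_nat; case: (A E) => [/(_ isT)|_]; case: (B E); case: (C E).
Qed.

Lemma deficiency_dev k (s : R) : (0 < k)%N -> 0 < s ->
  Pr p (fun E : graph => s <= `|(deficiency k E)%:R -
                              mean p (pairs n) (fun E : graph => (deficiency k E)%:R)|)
    <= n%:R / s ^+ 2.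
Proof.
move=> k0 s0; rewrite PrE; apply: le_trans (mean_dev_ge p01 _ _ s0) _.
rewrite ler_pM2r ?invr_gt0 ?exprn_gt0 //.
apply: (variance_chain_le p01 (V := @pairs_below n)
                           (f := fun E : graph => (deficiency k E)%:R)).
- exact: pairs_below0.
- exact: pairs_below_n.
- exact: pairs_belowS.
- by move=> i _; apply: deficiency_lipschitz_on.
Qed.

Lemma deficiency_mean_lt k (eps : R) : (0 < n)%N -> (0 < k)%N -> 0 < eps ->
    eps <= Pr p (fun E : graph => (chi E [set: 'I_n]%SET <= k)%N) ->
  mean p (pairs n) (fun E : graph => (deficiency k E)%:R) < (eps^-1 + 1) * Num.sqrt n%:R.
Proof.
move=> n0 k0 eps0 eps_le; set c := eps^-1 + 1; set sn := Num.sqrt n%:R.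
set m := mean _ _ _; have ieps0 : 0 < eps^-1 by rewrite invr_gt0.
have c0 : 0 < c by rewrite /c; lra.
have csn0 : 0 < c * sn by rewrite mulr_gt0 // sqrtr_gt0 ltr0n.
(* If chi <= k then the deficiency is 0, so a mean >= c sqrt n would put the
   event {chi <= k} in a Chebyshev tail of probability <= 1/c^2 < eps. *)
rewrite ltNge; apply/negP => le_m.
have : eps <= (c ^+ 2)^-1.
  have -> : (c ^+ 2)^-1 = n%:R / (c * sn) ^+ 2.
    rewrite exprMn sqr_sqrtr ?ler0n //; field.
    by rewrite pnatr_eq0 -lt0n n0 gt_eqF.
  apply: le_trans eps_le _; apply: le_trans (deficiency_dev k0 csn0).
  apply: ler_Pr => E; rewrite inE => EP chi_k.
  have -> : deficiency k E = 0%N.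
    apply/eqP; rewrite -leqn0 -(cards0 'I_n); apply: deficiency_le.
    by rewrite setC0; apply: colorable_widen chi_k (chi_colorable _ EP).
  by rewrite sub0r normrN (le_trans le_m (ler_norm _)).
rewrite -[_^-1]mul1r ler_pdivlMr ?exprn_gt0 //.
have -> : eps * c ^+ 2 = eps^-1 + 2 + eps by rewrite /c; field; rewrite gt_eqF.
lra.
Qed.

Lemma deficiency_tail k (eps w : R) : (0 < n)%N -> (0 < k)%N -> 0 < eps ->
    eps^-1 + 1 < w -> eps <= Pr p (fun E : graph => (chi E [set: 'I_n]%SET <= k)%N) ->
  Pr p (fun E : graph => w * Num.sqrt n%:R < (deficiency k E)%:R) <= (w - (eps^-1 + 1)) ^-2.
Proof.
move=> n0 k0 eps0 c_w eps_le; have := deficiency_mean_lt n0 k0 eps0 eps_le.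
set c := eps^-1 + 1; set sn := Num.sqrt n%:R; set m := mean _ _ _ => m_lt.
have sn0 : 0 < sn by rewrite sqrtr_gt0 ltr0n.
have wcsn0 : 0 < (w - c) * sn by rewrite mulr_gt0 // subr_gt0.
have -> : (w - c) ^-2 = n%:R / ((w - c) * sn) ^+ 2.
  rewrite exprMn sqr_sqrtr ?ler0n //; field.
  by rewrite pnatr_eq0 -lt0n n0 subr_eq0 gt_eqF.
apply: le_trans (deficiency_dev k0 wcsn0); apply: ler_Pr => E _ Y_gt.
by rewrite (le_trans _ (ler_norm _)) // mulrBl -/m; lra.
Qed.
End GnpProbability.

Lemma invr_sqr_lt (R : realFieldType) (d x : R) : 0 < d -> 1 + d^-1 < x -> x ^-2 < d.
Proof.
move=> d0 dx; have id0 : 0 < d^-1 by rewrite invr_gt0.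
have x0 : 0 < x by lra.
by rewrite -[d]invrK ltf_pV2 ?posrE ?invr_gt0 ?exprn_gt0 // expr2; nra.
Qed.

Section ChromaticConcentration.
Variables (R : realType) (n : nat) (p w G : R).
Hypotheses (p01 : 0 <= p <= 1) (n_gt0 : (0 < n)%N).
Local Notation graph := {set {set 'I_n}}.
Local Notation chiG E := (chi E [set: 'I_n]%SET).
Local Notation small_chi_le_G := (fun E : graph =>
  ((\max_(Z : {set 'I_n} | (#|Z|%:R : R) <= w * Num.sqrt n%:R) chi E Z)%:R <= G)).

Lemma Pr_chi_shift (k : int) (eps : R) : 0 < eps -> eps^-1 + 1 < w ->
    eps <= Pr p (fun E : graph => (chiG E)%:Z <= k) ->
  Pr p small_chi_le_G <=
    Pr p (fun E : graph => (chiG E)%:R <= k%:~R + G) + (w - (eps^-1 + 1)) ^-2.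
Proof.
move=> eps0 c_w eps_le.
have k_gt0 : 0 < k.
  rewrite ltNge; apply/negP => k_le0.
  have : Pr p (fun E : graph => (chiG E)%:Z <= k) = 0.
    by apply: Pr_pred0 => E _; rewrite -ltNge (le_lt_trans k_le0) // ltz_nat chi_gt0.
  lra.
case: k k_gt0 eps_le => // k; rewrite ltz_nat => k_gt0 eps_le.
apply: le_trans (lerD (lexx _) (deficiency_tail p01 n_gt0 k_gt0 eps0 c_w eps_le)).
apply: (Pr_subU p01) => E; rewrite inE => EP HE.
have [Y_gt | Y_le] := ltP (w * Num.sqrt n%:R) (deficiency k E)%:R; first by rewrite orbT.
have := chi_le_deficiency_add EP k_gt0 Y_le; rewrite -(ler_nat R) natrD => chi_le.
by rewrite (le_trans chi_le) // lerD2l.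
Qed.

Lemma chi_lower_tail (L : int) (delta : R) : 0 < delta -> delta^-1 + 1 < w ->
    (forall L', 1 / 2 <= Pr p (fun E : graph => (chiG E)%:Z <= L') -> L <= L') ->
    1 / 2 + (w - (delta^-1 + 1)) ^-2 < Pr p small_chi_le_G ->
  Pr p (fun E : graph => (chiG E)%:R < L%:~R - G) < delta.
Proof.
(* K is the largest integer below L - G. *)
move=> delta0 c_w L_min H_large; set K := Num.ceil (L%:~R - G) - 1.
have chi_K E : ((chiG E)%:R < L%:~R - G) = ((chiG E)%:Z <= K).
  by rewrite -[LHS]/((chiG E)%:Z%:~R < _) -ceil_gt_int /K -ltzD1 subrK.
rewrite ltNge; apply/negP => delta_le.
have /(Pr_chi_shift delta0 c_w) shift : delta <= Pr p (fun E : graph => (chiG E)%:Z <= K).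
  by rewrite (le_trans delta_le) // (ler_Pr p01) // => E _; rewrite chi_K.
have : Pr p (fun E : graph => (chiG E)%:R <= K%:~R + G) <=
       Pr p (fun E : graph => (chiG E)%:Z <= L - 1).
  apply: (ler_Pr p01) => E _ chi_le; rewrite -ltzD1 subrK -(ltr_int R).
  by have := ceilB1_lt (L%:~R - G : R); rewrite -/K; lra.
move=> le_Pr; have /L_min : 1 / 2 <= Pr p (fun E : graph => (chiG E)%:Z <= L - 1) by lra.
lia.
Qed.

Lemma chi_near_median (L : int) (delta : R) : 0 < delta -> 3 < w -> delta^-1 + 1 < w ->
    1 / 2 <= Pr p (fun E : graph => (chiG E)%:Z <= L) ->
    (forall L', 1 / 2 <= Pr p (fun E : graph => (chiG E)%:Z <= L') -> L <= L') ->
    1 / 2 + (w - (delta^-1 + 1)) ^-2 < Pr p small_chi_le_G ->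
  Pr p small_chi_le_G - (w - 3) ^-2 - delta <=
    Pr p (fun E : graph => `|(chiG E)%:R - L%:~R| <= G).
Proof.
move=> delta0 w3 c_w L_half L_min H_large.
have upper : Pr p small_chi_le_G <=
    Pr p (fun E : graph => (chiG E)%:R <= L%:~R + G) + (w - 3) ^-2.
  have half_inv : (1 / 2 : R)^-1 + 1 = 3 by rewrite div1r invrK; lra.
  by have := Pr_chi_shift (k := L) (eps := 1 / 2); rewrite half_inv; apply=> //; lra.
have lower := chi_lower_tail delta0 c_w L_min H_large.
have : Pr p (fun E : graph => (chiG E)%:R <= L%:~R + G) <=
    Pr p (fun E : graph => `|(chiG E)%:R - L%:~R| <= G) +
    Pr p (fun E : graph => (chiG E)%:R < L%:~R - G).
  apply: (Pr_subU p01) => E _ chi_le; rewrite ler_distl.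
  by case: ltP => chi_L; rewrite ?orbT // orbF; apply/andP; split; lra.
lra.
Qed.

Lemma chi_close_to_median (L : int) (eps : R) : 0 < eps -> 6 + (eps / 3)^-1 < w ->
    1 / 2 <= Pr p (fun E : graph => (chiG E)%:Z <= L) ->
    (forall L', 1 / 2 <= Pr p (fun E : graph => (chiG E)%:Z <= L') -> L <= L') ->
    `|1 - Pr p small_chi_le_G| < eps / 3 -> `|1 - Pr p small_chi_le_G| < 1 / 4 ->
  `|1 - Pr p (fun E : graph => `|(chiG E)%:R - L%:~R| <= G)| < eps.
Proof.
move=> eps0 w_big L_half L_min; set delta := eps / 3 in w_big *.
have delta0 : 0 < delta by rewrite divr_gt0.
have delta_inv0 : 0 < delta^-1 by rewrite invr_gt0.
rewrite !ltr_norml => /andP[_ H_delta] /andP[_ H_quarter].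
have tail3 : (w - 3) ^-2 < delta by apply: invr_sqr_lt; lra.
have tail_delta : (w - (delta^-1 + 1)) ^-2 < 1 / 4.
  by apply: invr_sqr_lt; [lra | rewrite div1r invrK; lra].
have w3 : 3 < w by lra.
have c_w : delta^-1 + 1 < w by lra.
have H_large : 1 / 2 + (w - (delta^-1 + 1)) ^-2 < Pr p small_chi_le_G by lra.
have near_L := chi_near_median delta0 w3 c_w L_half L_min H_large.
have le1 := Pr_le1 p01 (fun E : graph => `|(chiG E)%:R - L%:~R| <= G).
have eps3 : eps = 3 * delta by rewrite /delta mulrC divfK ?pnatr_eq0.
by apply/andP; split; lra.
Qed.
End ChromaticConcentration.

Theorem lemma5 (R : realType) (p : nat -> R) (omega : nat -> R)
  (Gamma : R -> nat -> R -> R) (Lambda : nat -> int) :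
  (forall n, 0 <= p n <= 1) ->
  (omega @ \oo --> +oo)%classic ->
  let z := fun n : nat => omega n * Num.sqrt (n%:R : R) in
  whp p (fun n E =>
    ((\max_(Z : {set 'I_n} | (#|Z|%:R : R) <= z n) chi E Z)%:R : R)
      <= Gamma (z n) n (p n)) ->
  (forall n, (1 / 2 : R) <= Pr (p n) (fun E => ((chi E [set: 'I_n]%SET)%:Z <= Lambda n)%R)
     /\ forall L : int, (1 / 2 : R) <= Pr (p n) (fun E => ((chi E [set: 'I_n]%SET)%:Z <= L)%R) ->
        (Lambda n <= L)%R) ->
  whp p (fun n E =>
    `|(chi E [set: 'I_n]%SET)%:R - (Lambda n)%:~R| <= Gamma (z n) n (p n)).
Proof.
move=> p01 /cvgryPgt omega_big z; rewrite /whp => /cvgrPdist_lt H_close median.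
apply/cvgrPdist_lt => eps eps0.
near=> n.
have [L_half L_min] := median n.
apply: (chi_close_to_median (w := omega n) (p01 n) _ eps0 _ L_half L_min).
- by near: n; apply: nbhs_infty_gt.
- by near: n; apply: omega_big.
- by near: n; apply: H_close; rewrite divr_gt0.
- by near: n; apply: H_close.
Unshelve. all: end_near.
Qed.
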